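(* Let $q$ be a conjunctive query and $q'$ a subquery of $q$ (a subset of its atoms); for a database $i$ for $q$, let $i'$ be its restriction to the relations of $q'$. Let $B$ be any map that assigns to each matching database $i'$ a set $B(i')\subseteq q'(i')$, and assume $\mathbf E[|B(I')|]\le\gamma\,\mathbf E[|q'(I')|]$. Then $\mathbf E[|q(I)\ltimes B(I')|]\le\gamma\,\mathbf E[|q(I)|]$, where $I$ is a uniformly chosen matching database and $I'$ its restriction.
   Context: Conjunctive queries are full and self-join-free; $q(i)$ is the set of assignments to the variables of $q$ satisfying all atoms on database $i$. Matching database over $[n]$: each relation has exactly $n$ tuples and each column contains each value of $[n]$ exactly once; uniformly chosen means each relation independently uniform among such. For $A\subseteq q(i)$ and $B\subseteq q'(i')$ with $\mathrm{atoms}(q')\subseteq\mathrm{atoms}(q)$, the semijoin $A\ltimes B$ is the set of tuples of $A$ whose projection onto the variables of $q'$ lies in $B$. *)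

From HB Require Import structures.
From mathcomp Require Import all_boot all_order all_algebra.
Set Implicit Arguments. Unset Strict Implicit. Unset Printing Implicit Defensive.
Import Order.TTheory GRing.Theory Num.Theory.

(* A full, self-join-free conjunctive query: a finite set of variables, a
   finite set of atoms (each atom has its own relation symbol, so
   self-join-freeness is built in); atom [a] has arity [arity a] and its
   j-th column carries variable [avar a j]. *)
Record cq := CQ {
  cvar : finType;
  catom : finType;
  arity : catom -> nat;
  avar : forall a : catom, 'I_(arity a) -> cvar }.

Definition db (q : cq) (n : nat) :=
  {dffun forall a : catom q, {set {ffun 'I_(arity a) -> 'I_n}}}.

Definition matching_rel (k n : nat) (R : {set {ffun 'I_k -> 'I_n}}) : bool :=
  (#|R| == n) && [forall c : 'I_k, forall v : 'I_n, #|[set t in R | t c == v]| == 1].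

Definition matching (q : cq) (n : nat) (i : db q n) : bool :=
  [forall a : catom q, matching_rel (i a)].

Definition answers (q : cq) (n : nat) (i : db q n) : {set {ffun cvar q -> 'I_n}} :=
  [set v : {ffun cvar q -> 'I_n} | [forall a : catom q, [ffun j => v (avar j)] \in i a]].

Definition occurs (q : cq) (S : {set catom q}) (x : cvar q) : bool :=
  [exists a in S, exists j : 'I_(arity a), avar j == x].

Definition sub_var (q : cq) (S : {set catom q}) := {x : cvar q | occurs S x}.
Definition sub_atom (q : cq) (S : {set catom q}) := {a : catom q | a \in S}.

Lemma occurs_avar (q : cq) (S : {set catom q}) (a : sub_atom S)
  (j : 'I_(arity (val a))) : occurs S (avar j).
Proof. by apply/existsP; exists (val a); rewrite (valP a) /=; apply/existsP; exists j. Qed.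

Definition subquery (q : cq) (S : {set catom q}) : cq :=
  @CQ (sub_var S) (sub_atom S) (fun a => arity (val a))
      (fun a j => exist _ (avar j) (occurs_avar j)).

Definition restrict (q : cq) (S : {set catom q}) (n : nat) (i : db q n)
  : db (subquery S) n := [ffun a : catom (subquery S) => i (val a)].

Definition proj (q : cq) (S : {set catom q}) (n : nat) (v : {ffun cvar q -> 'I_n})
  : {ffun cvar (subquery S) -> 'I_n} := [ffun x => v (val x)].

Definition semijoin (q : cq) (S : {set catom q}) (n : nat)
  (A : {set {ffun cvar q -> 'I_n}}) (B : {set {ffun cvar (subquery S) -> 'I_n}}) :=
  [set v in A | proj S v \in B].

(* Expectation of f(I) for I a uniformly chosen matching database for q over [n]
   (each relation independently uniform among matching relations, i.e. I uniform
   over the product set of matching databases). *)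
Definition Exp (R : numFieldType) (q : cq) (n : nat) (f : db q n -> R) : R :=
  (\sum_(i : db q n | matching i) f i) / #|[pred i : db q n | matching i]|%:R.

Arguments restrict {q} S {n} i.
Arguments proj {q} S {n} v.

From HB Require Import structures.
From mathcomp Require Import all_boot all_order all_algebra all_fingroup.
From mathcomp Require Import ring.
Import Order.TTheory GRing.Theory Num.Theory.
Set Implicit Arguments. Unset Strict Implicit. Unset Printing Implicit Defensive.

(* Split every answer [v] of [q] into its projection [t] on the subquery and
   the atoms outside [S].  For a fixed [t], the number [ext t I] of ways to
   extend [t] to an answer depends only on the relations outside [S], while
   [t \in B (restrict S I)] depends only on those inside [S]; since the
   relations are independent, E[|q(I) ⋉ B(I')|] = sum_t P(t ∈ B(I')) E[ext t I].
   Relabelling the domain values independently per variable preserves the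
   uniform distribution on matching databases and moves any [t] to any other,
   so E[ext t I] = c does not depend on [t].  Hence E[|q(I) ⋉ B(I')|] =
   c E[|B(I')|], and in particular (B = q') E[|q(I)|] = c E[|q'(I')|]. *)

Section Relabel.

Variables (q : cq) (n : nat) (s : cvar q -> {perm 'I_n}).

Definition relabel_tuple (a : catom q) (t : {ffun 'I_(arity a) -> 'I_n}) :
  {ffun 'I_(arity a) -> 'I_n} := [ffun j => s (avar j) (t j)].

Definition relabel (I : db q n) : db q n := [ffun a => relabel_tuple (a:=a) @: I a].

Definition relabel_assignment (v : {ffun cvar q -> 'I_n}) : {ffun cvar q -> 'I_n} :=
  [ffun x => s x (v x)].

Lemma relabel_tuple_inj a : injective (@relabel_tuple a).
Proof. by move=> t t' /ffunP E; apply/ffunP => j; have := E j; rewrite !ffunE => /perm_inj. Qed.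

Lemma relabel_assignment_inj : injective relabel_assignment.
Proof. by move=> v v' /ffunP E; apply/ffunP => x; have := E x; rewrite !ffunE => /perm_inj. Qed.

Lemma relabel_assignmentE (v : {ffun cvar q -> 'I_n}) a :
  [ffun j => relabel_assignment v (avar j)] = relabel_tuple [ffun j => v (@avar q a j)].
Proof. by apply/ffunP => j; rewrite !ffunE. Qed.

Lemma matching_relabel (I : db q n) : matching I -> matching (relabel I).
Proof.
move=> /forallP matchI; apply/forallP => a; have /andP[/eqP cardI /forallP colI] := matchI a.
rewrite ffunE; apply/andP; split; first by rewrite card_imset ?cardI //; apply: relabel_tuple_inj.
apply/forallP => c; apply/forallP => v.
rewrite -(card_preimset _ (@relabel_tuple_inj a)).
have /forallP/(_ ((s (avar c))^-1%g v)) := colI c.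
congr (_ == 1); apply: eq_card => t; rewrite !inE mem_imset; last exact: relabel_tuple_inj.
by rewrite ffunE -[in RHS](permKV (s (avar c)) v) (inj_eq perm_inj).
Qed.

End Relabel.

Lemma relabelK (q : cq) (n : nat) (s : cvar q -> {perm 'I_n}) :
  cancel (relabel s) (relabel (fun x => (s x)^-1)%g).
Proof.
move=> I; apply/ffunP => a; rewrite !ffunE -imset_comp -[RHS]imset_id.
by apply: eq_imset => t; apply/ffunP => j; rewrite !ffunE permK.
Qed.

Lemma matching_relabelE (q : cq) (n : nat) (s : cvar q -> {perm 'I_n}) (I : db q n) :
  matching (relabel s I) = matching I.
Proof.
apply/idP/idP; last exact: matching_relabel.
by move/(matching_relabel (fun x => (s x)^-1)%g); rewrite relabelK.
Qed.

Section Subquery.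

Variables (q : cq) (S : {set catom q}) (n : nat).

Local Notation assignment := {ffun cvar q -> 'I_n}.
Local Notation sub_assignment := {ffun cvar (subquery S) -> 'I_n}.

Definition glue (I J : db q n) : db q n := [ffun a => if a \in S then I a else J a].

Definition satisfies_rest (I : db q n) (v : assignment) : bool :=
  [forall a, (a \notin S) ==> ([ffun j => v (avar j)] \in I a)].

Definition ext (t : sub_assignment) (I : db q n) : nat :=
  #|[set v : assignment | (proj S v == t) && satisfies_rest I v]|.

Lemma proj_tuple (v : assignment) (a : catom (subquery S)) :
  [ffun j => proj S v (avar j)] = [ffun j => v (@avar q (val a) j)].
Proof. by apply/ffunP => j; rewrite !ffunE. Qed.

Lemma answers_split (I : db q n) (v : assignment) :
  (v \in answers I) = (proj S v \in answers (restrict S I)) && satisfies_rest I v.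
Proof.
rewrite !inE; apply/forallP/andP => [satI | [/forallP satS /forallP satR] a].
  by split; apply/forallP => a; rewrite ?ffunE ?proj_tuple ?satI ?implybT.
case: (boolP (a \in S)) => [aS | /(implyP (satR a))//].
by have := satS (exist _ a aS); rewrite ffunE proj_tuple.
Qed.

Lemma semijoin_answers_restrict (I : db q n) :
  semijoin (answers I) (answers (restrict S I)) = answers I.
Proof.
apply/setP => v; rewrite inE.
by case: (boolP (v \in answers I)) => //; rewrite answers_split => /andP[].
Qed.

Lemma card_semijoin (I : db q n) (B : {set sub_assignment}) :
  B \subset answers (restrict S I) ->
  #|semijoin (answers I) B| = (\sum_(t in B) ext t I)%N.
Proof.
move=> subB; rewrite -sum1_card (partition_big (proj S) (mem B)) /=; last first.
  by move=> v; rewrite inE => /andP[].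
apply: eq_bigr => t tB; rewrite /ext -sum1_card; apply: eq_bigl => v.
rewrite inE /semijoin inE answers_split.
apply/andP/andP => [[/andP[/andP[_ satR] _] /eqP->] // | [/eqP vt satR]].
by rewrite vt tB (subsetP subB _ tB) satR.
Qed.

Lemma matching_restrict (I : db q n) : matching I -> matching (restrict S I).
Proof. by move=> /forallP mI; apply/forallP => a; rewrite ffunE; apply: mI. Qed.

Lemma glueK (I J : db q n) : glue (glue I J) (glue J I) = I.
Proof. by apply/ffunP => a; rewrite !ffunE; case: (a \in S). Qed.

Lemma matching_glue (I J : db q n) :
  matching (glue I J) && matching (glue J I) = matching I && matching J.
Proof.
apply/andP/andP => [[/forallP mIJ /forallP mJI] | [/forallP mI /forallP mJ]].
  by split; apply/forallP => a; have := mIJ a; have := mJI a; rewrite !ffunE; case: (a \in S).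
by split; apply/forallP => a; rewrite ffunE; case: (a \in S).
Qed.

Lemma restrict_glue (I J : db q n) : restrict S (glue I J) = restrict S I.
Proof. by apply/ffunP => a; rewrite !ffunE (valP a). Qed.

Lemma ext_glue (t : sub_assignment) (I J : db q n) : ext t (glue J I) = ext t I.
Proof.
apply: eq_card => v; rewrite !inE; congr (_ && _).
by apply: eq_forallb => a; rewrite ffunE; case: (boolP (a \in S)).
Qed.

(* Independence of the relations inside and outside [S]: the involution
   [(I, J) |-> (glue I J, glue J I)] of pairs of matching databases. *)
Lemma sum_matching_mul (g h : db q n -> nat) :
  (forall I J, g (glue I J) = g I) -> (forall I J, h (glue J I) = h I) ->
  ((\sum_(I | matching I) g I) * (\sum_(I | matching I) h I) =
   #|[pred I : db q n | matching I]| * \sum_(I | matching I) g I * h I)%N.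
Proof.
move=> g_in h_out; rewrite big_distrl /=.
under eq_bigr do rewrite big_distrr /=.
rewrite pair_big_dep /=.
pose swap (p : db q n * db q n) := (glue p.1 p.2, glue p.2 p.1).
have swapK : involutive swap by case=> I J; rewrite /swap /= !glueK.
rewrite (reindex_inj (inv_inj swapK)) /=.
rewrite (eq_bigl (fun p => matching p.1 && matching p.2)); last by case=> I J; rewrite /= matching_glue.
under eq_bigr do rewrite g_in h_out.
rewrite -(pair_big (fun I : db q n => matching I) (fun I : db q n => matching I)
                   (fun I _ => g I * h I)) /=.
by rewrite exchange_big /= sum_nat_const.
Qed.

Lemma ext_relabel (s : cvar q -> {perm 'I_n}) (t : sub_assignment) (I : db q n) :
  ext [ffun y => s (val y) (t y)] (relabel s I) = ext t I.
Proof.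
rewrite /ext -(card_preimset _ (relabel_assignment_inj (s := s))).
apply: eq_card => v; rewrite !inE; congr (_ && _).
  have -> : proj S (relabel_assignment s v) = [ffun y => s (val y) (proj S v y)].
    by apply/ffunP => y; rewrite !ffunE.
  by apply/eqP/eqP => [/ffunP E | ->//]; apply/ffunP => y; have := E y; rewrite !ffunE => /perm_inj.
apply: eq_forallb => a; rewrite ffunE relabel_assignmentE mem_imset //.
exact: relabel_tuple_inj.
Qed.

Lemma sum_ext_const :
  exists c, forall t : sub_assignment, (\sum_(I : db q n | matching I) ext t I)%N = c.
Proof.
case: (pickP (@predT sub_assignment)) => [t0 _ | none]; last by exists 0%N => t; have := none t.
exists (\sum_(I : db q n | matching I) ext t0 I)%N => t.
pose s x := if insub x is Some y then tperm (t y) (t0 y) else 1%g.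
have -> : t0 = [ffun y => s (val y) (t y)] by apply/ffunP => y; rewrite ffunE /s valK tpermL.
rewrite [RHS](reindex_inj (can_inj (relabelK s))) /=.
by apply: eq_big => [I | I _]; rewrite ?matching_relabelE ?ext_relabel.
Qed.

Lemma sum_card_semijoin (c : nat) (B : db (subquery S) n -> {set sub_assignment}) :
  (forall t : sub_assignment, \sum_(I : db q n | matching I) ext t I = c)%N ->
  (forall i', matching i' -> B i' \subset answers i') ->
  (#|[pred I : db q n | matching I]| *
     \sum_(I : db q n | matching I) #|semijoin (answers I) (B (restrict S I))| =
   c * \sum_(I : db q n | matching I) #|B (restrict S I)|)%N.
Proof.
move=> ext_c subB.
rewrite (eq_bigr (fun I => \sum_t (t \in B (restrict S I)) * ext t I)%N); last first.
  move=> I mI; rewrite card_semijoin ?subB ?matching_restrict // big_mkcond.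
  by apply: eq_bigr => t _; case: (t \in _); rewrite ?mul1n.
have sum_mem_ext t : (#|[pred I : db q n | matching I]| *
    \sum_(I | matching I) (t \in B (restrict S I)) * ext t I =
    (\sum_(I | matching I) (t \in B (restrict S I)) : nat) * c)%N.
  rewrite -(ext_c t) sum_matching_mul // => I J; by rewrite ?restrict_glue ?ext_glue.
rewrite exchange_big big_distrr /=.
under eq_bigr do rewrite sum_mem_ext.
rewrite -big_distrl /= mulnC exchange_big /=; congr (_ * _); apply: eq_bigr => I _.
by rewrite -sum1_card [RHS]big_mkcond; apply: eq_bigr => t _; case: (t \in _).
Qed.

End Subquery.

Local Open Scope ring_scope.

Lemma Exp_card_semijoin (R : numFieldType) (q : cq) (S : {set catom q}) (n : nat) (c : nat)
    (B : db (subquery S) n -> {set {ffun cvar (subquery S) -> 'I_n}}) :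
  (forall t : {ffun cvar (subquery S) -> 'I_n}, \sum_(I : db q n | matching I) ext t I = c)%N ->
  (forall i', matching i' -> B i' \subset answers i') ->
  Exp (fun I : db q n => #|semijoin (answers I) (B (restrict S I))|%:R) =
  (c%:R / #|[pred I : db q n | matching I]|%:R) * Exp (fun I : db q n => #|B (restrict S I)|%:R)
    :> R.
Proof.
move=> ext_c /(sum_card_semijoin ext_c) /(congr1 (fun k => k%:R : R)).
rewrite /Exp !natrM !natr_sum; set N := _%:R; set X := \sum_(_ | _) _; set Y := \sum_(_ | _) _.
move=> sumE; have [-> | N0] := eqVneq N 0; first by rewrite !invr0 !mulr0.
by rewrite -[X](mulKf N0) sumE; field.
Qed.

Theorem lemma11 (R : realFieldType) (q : cq) (S : {set catom q}) (n : nat)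
  (B : db (subquery S) n -> {set {ffun cvar (subquery S) -> 'I_n}}) (gamma : R) :
  (forall i' : db (subquery S) n, matching i' -> B i' \subset answers i') ->
  Exp (fun I : db q n => #|B (restrict S I)|%:R)
    <= gamma * Exp (fun I : db q n => #|answers (restrict S I)|%:R) ->
  Exp (fun I : db q n => #|semijoin (answers I) (B (restrict S I))|%:R)
    <= gamma * Exp (fun I : db q n => #|answers I|%:R).
Proof.
move=> subB EB_le.
have [c ext_c] := sum_ext_const S n.
have Eanswers := Exp_card_semijoin R ext_c (fun i' _ => subxx (answers i')).
have -> : Exp (fun I : db q n => #|answers I|%:R) =
          Exp (fun I : db q n => #|semijoin (answers I) (answers (restrict S I))|%:R) :> R.
  by rewrite /Exp; congr (_ / _); apply: eq_bigr => I _; rewrite semijoin_answers_restrict.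
rewrite (Exp_card_semijoin R ext_c subB) Eanswers [gamma * _]mulrCA.
apply: ler_wpM2l EB_le.
by rewrite divr_ge0 ?ler0n.
Qed.
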